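(* Let $d\ge 1$, $\alpha>\beta>d$, $a,b>0$, and $\phi(r)=a r^{-\alpha}-b r^{-\beta}$ for $r>0$. For $L\in\mathcal L_d(1)$ set $$\lambda^\phi_L:=\left(\frac{\alpha a\,\zeta_L(\alpha)}{\beta b\,\zeta_L(\beta)}\right)^{\frac1{\alpha-\beta}},$$ which is the unique minimizer of $\lambda\mapsto E_\phi[\lambda L]$ on $(0,\infty)$. Suppose that $L_d\in\mathcal L_d(1)$ is a minimizer of $L\mapsto\zeta_L(\beta)$ on $\mathcal L_d(1)$ and that $\lambda^\phi_{L_d}L_d$ is the unique (up to isometries) global minimizer of $E_\phi$ on $\mathcal L_d$. Then $L_d$ is the unique (up to isometries) minimizer of $L\mapsto\lambda^\phi_L$ on $\mathcal L_d(1)$; that is, $\lambda^\phi_L\ge\lambda^\phi_{L_d}$ for all $L\in\mathcal L_d(1)$, with equality only if $L$ is isometric to $L_d$.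
   Context: $\mathcal L_d$ denotes the set of all lattices $L=\bigoplus_{i=1}^d\mathbb Z u_i$ with $\{u_i\}$ a basis of $\mathbb R^d$, and $\mathcal L_d(1)\subset\mathcal L_d$ the lattices with $|\det(u_1,\dots,u_d)|=1$. For $s>d$, the Epstein zeta function is $\zeta_L(s)=\sum_{q\in L\setminus\{0\}}|q|^{-s}$. For a function $f:(0,\infty)\to\mathbb R$ with $|f(r)|=O(r^{-d-\eta})$ as $r\to\infty$ for some $\eta>0$, $E_f[L]:=\sum_{q\in L\setminus\{0\}}f(|q|)$. Uniqueness of minimizers among lattices is always understood up to isometries. *)

From HB Require Import structures.
From mathcomp Require Import all_boot all_order all_algebra.
From mathcomp Require Import all_classical all_reals all_analysis.
Set Implicit Arguments. Unset Strict Implicit. Unset Printing Implicit Defensive.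
Import Order.TTheory GRing.Theory Num.Theory.
Local Open Scope classical_set_scope.
Local Open Scope ring_scope.

Definition enorm (R : realType) (d : nat) (v : 'rV[R]_d) : R :=
  Num.sqrt (\sum_(i < d) v ord0 i ^+ 2).

(* A lattice of R^d is given by a basis matrix M (rows u_1..u_d) with det M != 0;
   lattice M is the set of integer combinations of the rows. *)
Definition is_basis (R : realType) (d : nat) (M : 'M[R]_d) : Prop := \det M != 0.

Definition unit_covol (R : realType) (d : nat) (M : 'M[R]_d) : Prop := `|\det M| = 1.

Definition lattice (R : realType) (d : nat) (M : 'M[R]_d) : set 'rV[R]_d :=
  [set q | exists c : 'rV[int]_d, q = map_mx (fun z : int => z%:~R) c *m M].

Definition lattice0 (R : realType) (d : nat) (M : 'M[R]_d) : set 'rV[R]_d :=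
  lattice M `\ 0.

Definition zeta (R : realType) (d : nat) (M : 'M[R]_d) (s : R) : R :=
  fine (\esum_(q in lattice0 M) ((enorm q) `^ (- s))%:E).

(* E_f[L] = sum_{q in L\{0}} f(|q|), an absolutely convergent sum under the
   decay hypothesis on f; written as (sum of positive parts) - (sum of negative parts). *)
Definition energy (R : realType) (d : nat) (f : R -> R) (M : 'M[R]_d) : R :=
  fine (\esum_(q in lattice0 M) (Num.max (f (enorm q)) 0)%:E)
  - fine (\esum_(q in lattice0 M) (Num.max (- f (enorm q)) 0)%:E).

Definition phi (R : realType) (a b alpha beta : R) (r : R) : R :=
  a * r `^ (- alpha) - b * r `^ (- beta).

Definition lambda_phi (R : realType) (d : nat) (a b alpha beta : R) (M : 'M[R]_d) : R :=
  ((alpha * a * zeta M alpha) / (beta * b * zeta M beta)) `^ (alpha - beta)^-1.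

(* Lattices isometric: some orthogonal map sends one onto the other (for
   lattices, any isometry of R^d mapping L onto L' can be taken linear). *)
Definition isometric (R : realType) (d : nat) (M N : 'M[R]_d) : Prop :=
  exists Q : 'M[R]_d, Q *m Q^T = 1%:M /\
    (fun q => q *m Q) @` lattice M = lattice N.

From HB Require Import structures.
From mathcomp Require Import all_boot all_order all_algebra.
From mathcomp Require Import all_classical all_reals all_analysis.
From mathcomp Require Import ring lra.
Import Order.TTheory GRing.Theory Num.Theory numFieldNormedType.Exports.
Set Implicit Arguments. Unset Strict Implicit.
Local Open Scope classical_set_scope.
Local Open Scope ring_scope.

(* For s > d the Epstein zeta function zeta_L(s) is finite and positive, so
   E_phi[L] = a zeta_L(alpha) - b zeta_L(beta); since zeta_{lambda L}(s) =
   lambda^-s zeta_L(s), at the optimal dilation this is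
     E_phi[lambda_L L] = - (1 - beta/alpha) b zeta_L(beta) lambda_L^-beta.
   Comparing with the minimal energy E_phi[lambda_{L_d} L_d] and using
   zeta_{L_d}(beta) <= zeta_L(beta) yields lambda_{L_d} <= lambda_L; equality
   forces equal zeta values, hence equal energies, hence isometric lattices. *)

Section nonneg_esum.
Context {R : realType} {T : choiceType}.
Local Open Scope ereal_scope.

Lemma esum_subset (A B : set T) (f : T -> \bar R) :
  A `<=` B -> (forall t, B t -> 0 <= f t) ->
  \esum_(t in A) f t <= \esum_(t in B) f t.
Proof.
move=> AB f0; apply: ge_ereal_sup => _ [X [finX XA] <-].
by apply: ereal_sup_ubound; exists X => //; split => // x /XA /AB.
Qed.

Lemma esumZ_le (A : set T) (c : R) (f : T -> \bar R) : (0 <= c)%R ->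
  (forall t, 0 <= f t) ->
  \esum_(t in A) (c%:E * f t) <= c%:E * \esum_(t in A) f t.
Proof.
move=> c0 f0; apply: ge_ereal_sup => _ [X [finX XA] <-].
rewrite -ge0_mule_fsumr//; apply: lee_pmul => //.
  by apply: fsume_ge0 => i _; apply: f0.
by apply: ereal_sup_ubound; exists X.
Qed.

(* Homogeneity of nonnegative sums; the reverse inequality follows from
   esumZ_le applied with the factor c^-1. *)
Lemma esumZ (A : set T) (c : R) (f : T -> \bar R) : (0 <= c)%R ->
  (forall t, 0 <= f t) ->
  \esum_(t in A) (c%:E * f t) = c%:E * \esum_(t in A) f t.
Proof.
move=> c0 f0; apply/eqP; rewrite eq_le esumZ_le //=.
have [->|cn0] := eqVneq c 0%R.
  by rewrite mul0e; apply: esum_ge0 => i _; rewrite mul0e.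
have cp : (0 < c)%R by rewrite lt_neqAle eq_sym cn0.
have cf0 t : 0 <= c%:E * f t by apply: mule_ge0; rewrite ?lee_fin.
have le_inv : \esum_(t in A) f t <= c^-1%:E * \esum_(t in A) (c%:E * f t).
  apply: le_trans (esumZ_le _ _ cf0); last by rewrite invr_ge0.
  by apply: le_esum => t _; rewrite muleA -EFinM mulVf // mul1e.
have := lee_wpmul2l (x := c%:E) _ le_inv.
by rewrite muleA -EFinM mulfV // mul1e; apply; rewrite lee_fin.
Qed.

Lemma esum_fineK (A : set T) (f : T -> \bar R) :
  (forall t, 0 <= f t) -> \esum_(t in A) f t < +oo ->
  (fine (\esum_(t in A) f t))%:E = \esum_(t in A) f t.
Proof.
move=> f0 fin; apply: fineK; rewrite ge0_fin_numE //.
by apply: esum_ge0 => t _.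
Qed.

Lemma fine_esum_parts (A : set T) (u v : T -> R) :
  (forall t, 0 <= u t)%R -> (forall t, 0 <= v t)%R ->
  \esum_(t in A) (u t)%:E < +oo -> \esum_(t in A) (v t)%:E < +oo ->
  (fine (\esum_(t in A) (Num.max (u t - v t) 0)%:E)
   - fine (\esum_(t in A) (Num.max (v t - u t) 0)%:E)
   = fine (\esum_(t in A) (u t)%:E) - fine (\esum_(t in A) (v t)%:E))%R.
Proof.
move=> u0 v0 ufin vfin.
pose fp t := (Num.max (u t - v t) 0)%:E; pose fm t := (Num.max (v t - u t) 0)%:E.
have fp0 t : 0 <= fp t by rewrite lee_fin le_max lexx orbT.
have fm0 t : 0 <= fm t by rewrite lee_fin le_max lexx orbT.
have u0' t : 0 <= (u t)%:E by rewrite lee_fin.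
have v0' t : 0 <= (v t)%:E by rewrite lee_fin.
have parts t : fp t + (v t)%:E = fm t + (u t)%:E.
  rewrite /fp /fm -!EFinD; congr (_%:E).
  have [h|h] := leP 0%R (u t - v t)%R.
    by rewrite (max_r (_ : (v t - u t <= 0)%R)); lra.
  by rewrite (max_l (_ : (0 <= v t - u t)%R)); lra.
have fpfin : \esum_(t in A) fp t < +oo.
  apply: le_lt_trans ufin; apply: le_esum => t _.
  by rewrite lee_fin ge_max u0 andbT lerBlDr lerDl v0.
have fmfin : \esum_(t in A) fm t < +oo.
  apply: le_lt_trans vfin; apply: le_esum => t _.
  by rewrite lee_fin ge_max v0 andbT lerBlDr lerDl u0.
have sums : \esum_(t in A) fp t + \esum_(t in A) (v t)%:E =
            \esum_(t in A) fm t + \esum_(t in A) (u t)%:E.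
  by rewrite -!esumD //; apply: eq_esum => t _; rewrite parts.
move: sums; rewrite -(esum_fineK fp0 fpfin) -(esum_fineK fm0 fmfin).
rewrite -(esum_fineK u0' ufin) -(esum_fineK v0' vfin) -!EFinD => -[].
by rewrite /fp /fm; lra.
Qed.

End nonneg_esum.

(* fine is positively homogeneous on nonnegative extended reals (including +oo,
   where both sides vanish). *)
Lemma fine_pmul {R : realType} (x : R) (y : \bar R) : 0 < x -> (0 <= y)%E ->
  fine (x%:E * y)%E = x * fine y.
Proof.
move=> x0; case: y => [r|_|] //=.
by rewrite mulry gtr0_sg // mul1e /= mulr0.
Qed.

Section powers.
Context {R : realType}.

Lemma powRN_le (x y p : R) : 0 < x -> x <= y -> 0 <= p -> y `^ (- p) <= x `^ (- p).
Proof.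
move=> x0 xy p0; have y0 : 0 < y by apply: lt_le_trans xy.
rewrite !powRN lef_pV2 ?posrE ?powR_gt0 //.
by apply: (ge0_ler_powR p0) => //; rewrite nnegrE ltW.
Qed.

Lemma powRN_lt (x y p : R) : 0 < x -> x < y -> 0 < p -> y `^ (- p) < x `^ (- p).
Proof.
move=> x0 xy p0; have y0 : 0 < y by apply: lt_trans xy.
rewrite !powRN ltf_pV2 ?posrE ?powR_gt0 //.
by apply: (gt0_ltr_powR p0) => //; rewrite nnegrE ltW.
Qed.

(* By the mean value theorem for x |-> x^(1-p) on [x, x+1], the term
   (x+1)^-p of the p-series is dominated by a telescoping difference. *)
Lemma powR_telescope_step (p x : R) : 1 < p -> 1 <= x ->
  (p - 1) * (x + 1) `^ (- p) <= x `^ (1 - p) - (x + 1) `^ (1 - p).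
Proof.
move=> p1 x1.
have x0 : 0 < x by apply: lt_le_trans x1.
have hx : x < x + 1 by rewrite ltrDl.
have cpos c : c \in `]x, x + 1[ -> 0 < c.
  by rewrite in_itv /= => /andP[h _]; apply: lt_trans h.
have hc : {within [set` `[x, x + 1]%R], continuous (fun y : R => y `^ (1 - p))}%classic.
  apply: derivable_within_continuous => c cin.
  apply: derivable_powR; rewrite in_itv /= andbT; apply: lt_le_trans x0 _.
  by move: cin; rewrite in_itv /= => /andP[].
have [c cin E] := @MVT R (fun y => y `^ (1 - p)) (fun c => (1 - p) * c `^ (1 - p - 1))
  x (x + 1) hx (fun c cin => is_derive1_powR (1 - p) (cpos c cin)) hc.
have c0 := cpos c cin.
have cx : c <= x + 1 by move: cin; rewrite in_itv /= => /andP[_ /ltW].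
rewrite -[X in _ <= X]opprB E (_ : x + 1 - x = 1) ?mulr1 -?mulNr ?opprB; last by ring.
rewrite (_ : 1 - p - 1 = - p); last by ring.
apply: ler_wpM2l; first by rewrite subr_ge0 ltW.
by apply: powRN_le => //; rewrite ltW // (lt_trans ltr01).
Qed.

Lemma pseries_partial_bound (p : R) (N : nat) : 1 < p ->
  \sum_(n < N) (n.+1%:R) `^ (- p) <= p / (p - 1).
Proof.
move=> p1; have pp : 0 < p - 1 by rewrite subr_gt0.
(* Telescoping gives the sharper bound with the tail term subtracted. *)
suff tail n : \sum_(k < n.+1) (k.+1%:R) `^ (- p)
              <= p / (p - 1) - (n.+1%:R) `^ (1 - p) / (p - 1).
  case: N => [|N]; first by rewrite big_ord0 divr_ge0 // ltW // (lt_trans ltr01).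
  by apply: le_trans (tail N) _; rewrite lerBlDr lerDl divr_ge0 ?powR_ge0 // ltW.
elim: n => [|n IH]; first by rewrite big_ord1 powR1 -mulrBl mulfV ?gt_eqF.
rewrite big_ord_recr /=; apply: le_trans (lerD IH (lexx _)) _.
have step : (p - 1) * (n.+1%:R + 1) `^ (- p)
            <= n.+1%:R `^ (1 - p) - (n.+1%:R + 1) `^ (1 - p).
  by apply: powR_telescope_step; rewrite ?ler1n.
rewrite mulrC -(ler_pdivlMr _ _ pp) mulrBl in step.
by rewrite -(natr1 n.+1); lra.
Qed.

End powers.

Section decay_sums.
Context {R : realType}.

(* The summable majorant of a lattice sum: (1 + |k|)^-p for k in Z. *)
Definition decay (p : R) (k : int) : R := (1 + `|k%:~R : R|) `^ (- p).

Lemma decay_ge0 (p : R) (k : int) : 0 <= decay p k.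
Proof. exact: powR_ge0. Qed.

Lemma esum_pseries_bound (p : R) : 1 < p ->
  (\esum_(n in [set: nat]) ((n.+1%:R : R) `^ (- p))%:E <= (p / (p - 1))%:E)%E.
Proof.
move=> p1; rewrite -nneseries_esumT; last by move=> n; rewrite lee_fin powR_ge0.
apply: lime_le; first by apply: is_cvg_nneseries => n _ _; rewrite lee_fin powR_ge0.
apply: nearW => n; rewrite sumEFin lee_fin big_mkord.
exact: pseries_partial_bound.
Qed.

(* Splitting Z into the nonnegative integers and the Negz n = -(n+1), each half
   of the sum of decay p is dominated by the p-series. *)
Lemma esum_decay_bound (p : R) : 1 < p ->
  (\esum_(k in [set: int]) (decay p k)%:E <= (2 * (p / (p - 1)))%:E)%E.
Proof.
move=> p1.
rewrite (esumID [set k : int | 0 <= k]); last by move=> k _; rewrite lee_fin decay_ge0.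
rewrite (_ : 2 * (p / (p - 1)) = p / (p - 1) + p / (p - 1)); last by ring.
rewrite EFinD; apply: leeD.
  have -> : [set: int] `&` [set k : int | 0 <= k] = (fun n : nat => n%:Z) @` [set: nat].
    apply/seteqP; split => [k [_ /= k0]|k [n _ <-]] /=; last by split.
    by exists `|k|%N => //; rewrite gez0_abs.
  rewrite esum_image; last by move=> m n _ _ [].
  apply: le_trans _ (esum_pseries_bound p1).
  by apply: le_esum => n _; rewrite /decay lee_fin /= normr_nat -natr1 addrC.
have -> : [set: int] `&` ~` [set k : int | 0 <= k] = (fun n : nat => Negz n) @` [set: nat].
  apply/seteqP; split => [k [_ /= k0]|k [n _ <-]] /=; last by split.
  by case: k k0 => [n|n] //= _; exists n.
rewrite esum_image; last by move=> m n _ _ [].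
apply: le_trans _ (esum_pseries_bound p1).
apply: le_esum => n _; rewrite lee_fin /decay NegzE mulrNz normrN /= normr_nat.
by apply: powRN_le; rewrite ?ltr0Sn ?lerDr // ltW // (lt_trans ltr01).
Qed.

Lemma esum_mx11 (F : int -> \bar R) :
  \esum_(a in [set: 'M[int]_(1,1)]) F (a ord0 ord0) = \esum_(k in [set: int]) F k.
Proof.
rewrite (reindex_esum [set: int] [set: 'M[int]_(1,1)] (fun k => const_mx k)).
  by apply: eq_esum => k _; rewrite mxE.
split.
- by move=> k.
- by move=> k l _ _ /matrixP /(_ ord0 ord0); rewrite !mxE.
- move=> a _; exists (a ord0 ord0) => //; apply/matrixP => i j.
  by rewrite mxE !ord1.
Qed.

(* Fubini over Z^(1+n) = Z x Z^n: the product majorant on Z^n sums to at most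
   S^n when its one-dimensional factor sums to at most S. *)
Lemma esum_decay_prod_bound (p S : R) (n : nat) : 0 <= S ->
  (\esum_(k in [set: int]) (decay p k)%:E <= S%:E)%E ->
  (\esum_(c in [set: 'rV[int]_n]) (\prod_(j < n) decay p (c ord0 j))%:E
     <= (S ^+ n)%:E)%E.
Proof.
move=> S0 hS; elim: n => [|n IH].
  have -> : [set: 'rV[int]_0] = [set 0].
    by apply/seteqP; split => x // _; rewrite /= thinmx0.
  by rewrite esum_set1 ?big_ord0 ?expr0 ?lee_fin.
have prod_ge0 m (c : 'rV[int]_m) : (0 <= (\prod_(j < m) decay p (c ord0 j))%:E)%E.
  by rewrite lee_fin prodr_ge0 // => j _; rewrite decay_ge0.
have prod_split (a : 'M[int]_(1,1)) (b : 'rV[int]_n) :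
    \prod_(j < 1 + n) decay p (row_mx a b ord0 j)
    = decay p (a ord0 ord0) * \prod_(j < n) decay p (b ord0 j).
  rewrite big_split_ord big_ord1 /= (row_mxEl a b ord0 ord0); congr (_ * _).
  by apply: eq_bigr => j _; rewrite row_mxEr.
change (\esum_(c in [set: 'M[int]_(1, 1 + n)])
  (\prod_(j < 1 + n) decay p (c ord0 j))%:E <= (S ^+ n.+1)%:E)%E.
rewrite (reindex_esum ([set: 'M[int]_(1,1)] `*`` (fun _ => [set: 'rV[int]_n]))
   [set: 'M[int]_(1, 1 + n)] (fun x => row_mx x.1 x.2)); last first.
  split.
  - by move=> x.
  - by move=> [x1 x2] [y1 y2] _ _ /eq_row_mx [/= -> ->].
  - by move=> a _; exists (lsubmx a, rsubmx a) => //=; rewrite hsubmxK.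
rewrite -(@esum_esum _ _ _ [set: 'M[int]_(1,1)] (fun _ => [set: 'rV[int]_n])
   (fun a b => (\prod_(j < 1 + n) decay p (row_mx a b ord0 j))%:E)); last first.
  by move=> a b _ _; apply: prod_ge0.
apply: (@le_trans _ _ (\esum_(a in [set: 'M[int]_(1,1)])
   ((S ^+ n)%:E * (decay p (a ord0 ord0))%:E))%E).
  apply: le_esum => a _.
  under eq_esum do rewrite prod_split EFinM.
  rewrite esumZ ?decay_ge0 // muleC; apply: lee_wpmul2r => //.
  by rewrite lee_fin decay_ge0.
rewrite esumZ ?exprn_ge0 //; last by move=> a; rewrite lee_fin decay_ge0.
rewrite (esum_mx11 (fun k => (decay p k)%:E)) exprSr EFinM.
by apply: lee_wpmul2l => //; rewrite lee_fin exprn_ge0.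
Qed.

End decay_sums.

Section lattice_sums.
Context {R : realType} {d : nat}.

Definition intmx (c : 'rV[int]_d) : 'rV[R]_d := map_mx (fun z : int => z%:~R) c.

Lemma intmx_inj : injective intmx.
Proof.
move=> c c' /matrixP h; apply/matrixP => i j; have := h i j; rewrite !mxE.
exact: intr_inj.
Qed.

Lemma enorm_ge0 (v : 'rV[R]_d) : 0 <= enorm v.
Proof. exact: sqrtr_ge0. Qed.

Lemma enorm_ge_coord (v : 'rV[R]_d) j : `|v ord0 j| <= enorm v.
Proof.
rewrite /enorm -sqrtr_sqr ler_sqrt; last by rewrite sumr_ge0 // => i _; rewrite sqr_ge0.
by rewrite (bigD1 j) //= lerDl sumr_ge0 // => i _; rewrite sqr_ge0.
Qed.

Lemma enorm_gt0 (v : 'rV[R]_d) : v != 0 -> 0 < enorm v.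
Proof.
move=> v0; rewrite lt_neqAle enorm_ge0 andbT eq_sym; apply: contra v0 => /eqP e0.
apply/eqP/matrixP => i j; rewrite !ord1 mxE; apply/eqP; rewrite -normr_eq0.
by rewrite eq_le normr_ge0 andbT -e0 enorm_ge_coord.
Qed.

Lemma enorm_scale (v : 'rV[R]_d) (l : R) : 0 <= l -> enorm (l *: v) = l * enorm v.
Proof.
move=> l0; rewrite /enorm.
under eq_bigr do rewrite mxE exprMn.
by rewrite -mulr_sumr sqrtrM ?sqr_ge0 // sqrtr_sqr ger0_norm.
Qed.

(* For an invertible basis M, the integer coordinates of a lattice point c M
   are controlled by its norm: |c_j| <= K |c M|, with K bounding M^-1. *)
Lemma coord_bound (M : 'M[R]_d) : \det M != 0 ->
  exists2 K, 0 < K & forall (c : 'rV[int]_d) j,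
    `|(c ord0 j)%:~R : R| <= K * enorm (intmx c *m M).
Proof.
move=> hM; have uM : M \in unitmx by rewrite unitmxE unitfE.
set Mi := invmx M.
exists (1 + \sum_i \sum_j `|Mi i j|).
  by rewrite ltr_pwDl // sumr_ge0 // => i _; rewrite sumr_ge0.
move=> c j; set v := intmx c *m M.
have -> : (c ord0 j)%:~R = (v *m Mi) ord0 j by rewrite /v mulmxK // mxE.
rewrite mxE; apply: le_trans (ler_norm_sum _ _ _) _.
apply: (@le_trans _ _ (\sum_i enorm v * `|Mi i j|)).
  by apply: ler_sum => i _; rewrite normrM ler_wpM2r // enorm_ge_coord.
rewrite -mulr_sumr mulrC ler_wpM2r ?enorm_ge0 //.
apply: le_trans (ler_wpDl ler01 (lexx _)); apply: ler_sum => i _.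
by rewrite (bigD1 j) //= lerDl sumr_ge0.
Qed.

Lemma lattice0E (M : 'M[R]_d) : \det M != 0 ->
  lattice0 M = (fun c => intmx c *m M) @` [set c | c != 0].
Proof.
move=> hM; have uM : M \in unitmx by rewrite unitmxE unitfE.
have intmx0 : intmx 0 = 0 by apply/matrixP => i j; rewrite !mxE.
apply/seteqP; split.
  move=> q [[c ->]] /= q0; exists c => //=; apply/eqP => c0; apply: q0.
  by rewrite -[map_mx _ _]/(intmx c) c0 intmx0 mul0mx.
move=> q [c /= c0 <-]; split; first by exists c.
move=> /= /(congr1 (mulmx^~ (invmx M))); rewrite mulmxK // mul0mx => h.
by apply: (negP c0); apply/eqP/intmx_inj; rewrite h intmx0.
Qed.

(* Termwise domination of the zeta series by the product majorant:
   |c M|^-s <= (2K)^s prod_j (1 + |c_j|)^(-s/d) for c != 0, since every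
   1 + |c_j| is at most 2 K |c M| (some |c_j| >= 1 gives 1 <= K |c M|). *)
Lemma zeta_term_bound (M : 'M[R]_d) (s K : R) : (0 < d)%N -> 0 <= s -> 0 < K ->
  (forall (c : 'rV[int]_d) j, `|(c ord0 j)%:~R : R| <= K * enorm (intmx c *m M)) ->
  forall c : 'rV[int]_d, c != 0 ->
  enorm (intmx c *m M) `^ (- s)
    <= (2 * K) `^ s * \prod_(j < d) decay (s / d%:R) (c ord0 j).
Proof.
move=> d0 s0 K0 hK c c0; set e := enorm (intmx c *m M).
have [j cj] : exists j, c ord0 j != 0.
  apply/existsP; apply: contraR c0 => /existsPn h; apply/eqP/matrixP => i k.
  by rewrite !ord1 mxE; move: (h k); rewrite negbK => /eqP.
have Ke1 : 1 <= K * e.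
  apply: le_trans (hK c j); apply: norm_intr_ge1; rewrite ?intr_int //.
  by rewrite intr_eq0.
have e0 : 0 < e by rewrite -(pmulr_rgt0 _ K0); apply: lt_le_trans Ke1.
have dp : 0 < d%:R :> R by rewrite ltr0n.
have coord_le i : 1 + `|(c ord0 i)%:~R : R| <= 2 * K * e.
  by rewrite -mulrA mulr2n mulrDl mul1r; apply: lerD.
have : \prod_(i < d) (2 * K * e) `^ (- (s / d%:R))
       <= \prod_(i < d) decay (s / d%:R) (c ord0 i).
  apply: ler_prod => i _; rewrite powR_ge0 /=; apply: powRN_le => //.
  by rewrite divr_ge0 // ltW.
rewrite prodr_const card_ord -powR_mulrn ?powR_ge0 // -powRrM.
rewrite (_ : - (s / d%:R) * d%:R = - s); last by rewrite mulNr divfK // gt_eqF.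
have K2_ge0 : 0 <= 2 * K by rewrite mulr_ge0 // ltW.
rewrite (powRM _ K2_ge0 (ltW e0)) => h.
apply: le_trans (ler_wpM2l (powR_ge0 _ _) h).
by rewrite mulrA [(2 * K) `^ (- s)]powRN mulfV ?mul1r // gt_eqF // powR_gt0 // mulr_gt0.
Qed.

(* The Epstein zeta series of a lattice of R^d converges for s > d:
   by zeta_term_bound it is dominated by a product of d sums over Z of
   (1 + |k|)^-p with p = s/d > 1. *)
Lemma zeta_esum_fin (M : 'M[R]_d) (s : R) : \det M != 0 -> (0 < d)%N -> d%:R < s ->
  (\esum_(q in lattice0 M) ((enorm q) `^ (- s))%:E < +oo)%E.
Proof.
move=> hM d0 ds; have uM : M \in unitmx by rewrite unitmxE unitfE.
have s0 : 0 <= s by apply: ltW; apply: le_lt_trans ds.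
have [K K0 hK] := coord_bound hM.
set p := s / d%:R.
have p1 : 1 < p by rewrite /p ltr_pdivlMr ?ltr0n // mul1r.
set S := 2 * (p / (p - 1)).
have S0 : 0 <= S by rewrite mulr_ge0 // divr_ge0 // ?subr_ge0 ltW // (lt_trans _ p1).
rewrite lattice0E // esum_image; last first.
  move=> c c' _ _ /(congr1 (mulmx^~ (invmx M))); rewrite !mulmxK //.
  exact: intmx_inj.
apply: (@le_lt_trans _ _ (((2 * K) `^ s * S ^+ d)%:E)); last by rewrite ltry.
have prod_ge0 (c : 'rV[int]_d) : (0 <= (\prod_(j < d) decay p (c ord0 j))%:E)%E.
  by rewrite lee_fin prodr_ge0 // => j _; rewrite decay_ge0.
apply: (@le_trans _ _ (\esum_(c in [set c : 'rV[int]_d | c != 0])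
   (((2 * K) `^ s)%:E * (\prod_(j < d) decay p (c ord0 j))%:E)%E)).
  by apply: le_esum => c /= c0; rewrite -EFinM lee_fin zeta_term_bound.
apply: le_trans (esum_subset (B := setT) _ _) _ => //.
  by move=> c _; rewrite mule_ge0 // lee_fin powR_ge0.
rewrite esumZ ?powR_ge0 // EFinM; apply: lee_wpmul2l; first by rewrite lee_fin powR_ge0.
exact/esum_decay_prod_bound/esum_decay_bound.
Qed.

Lemma zeta_gt0 (M : 'M[R]_d) (s : R) : \det M != 0 -> (0 < d)%N -> d%:R < s ->
  0 < zeta M s.
Proof.
move=> hM d0 ds.
set c : 'rV[int]_d := const_mx 1.
have c0 : c != 0.
  by apply/eqP => /matrixP /(_ ord0 (Ordinal d0)) /eqP; rewrite !mxE oner_eq0.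
set q := intmx c *m M.
have Lq : lattice0 M q by rewrite lattice0E //; exists c.
have q0 : q != 0 by move: Lq => [_ /= /eqP].
have term_gt0 : (0 < ((enorm q) `^ (- s))%:E)%E by rewrite lte_fin powR_gt0 // enorm_gt0.
rewrite /zeta fine_gt0 // zeta_esum_fin // andbT.
apply: lt_le_trans term_gt0 _; apply: esum_ge; exists [set q].
  by split; [exact: finite_set1|move=> x ->].
by rewrite fsbig_set1.
Qed.

Lemma energy_phiE (M : 'M[R]_d) (a b alpha beta : R) :
  \det M != 0 -> (0 < d)%N -> d%:R < beta -> beta < alpha -> 0 <= a -> 0 <= b ->
  energy (phi a b alpha beta) M = a * zeta M alpha - b * zeta M beta.
Proof.
move=> hM d0 db ba a0 b0.
pose u (q : 'rV[R]_d) := a * enorm q `^ (- alpha).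
pose v (q : 'rV[R]_d) := b * enorm q `^ (- beta).
have u0 q : 0 <= u q by rewrite mulr_ge0 ?powR_ge0.
have v0 q : 0 <= v q by rewrite mulr_ge0 ?powR_ge0.
have esum_zeta (c s : R) : 0 <= c -> d%:R < s ->
    \esum_(q in lattice0 M) (c * enorm q `^ (- s))%:E = (c * zeta M s)%:E.
  have term_ge0 q : (0 <= (enorm q `^ (- s))%:E)%E by rewrite lee_fin powR_ge0.
  by move=> c0 ds; rewrite /zeta EFinM esum_fineK ?zeta_esum_fin // -esumZ //.
have da : d%:R < alpha by apply: lt_trans ba.
have ufin : (\esum_(q in lattice0 M) (u q)%:E < +oo)%E by rewrite esum_zeta // ltry.
have vfin : (\esum_(q in lattice0 M) (v q)%:E < +oo)%E by rewrite esum_zeta // ltry.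
have := fine_esum_parts u0 v0 ufin vfin.
rewrite !esum_zeta //= /energy /phi => <-.
by congr (_ - fine _); apply: eq_esum => q _; rewrite opprB.
Qed.

End lattice_sums.

Section dilations.
Context {R : realType} {d : nat}.

Lemma lattice_scale (M : 'M[R]_d) (l : R) :
  lattice (l *: M) = (fun q => l *: q) @` lattice M.
Proof.
apply/seteqP; split.
  move=> q [c ->]; exists (map_mx (fun z : int => z%:~R) c *m M); first by exists c.
  by rewrite scalemxAr.
by move=> q [q' [c ->] <-]; exists c; rewrite scalemxAr.
Qed.

Lemma lattice0_scale (M : 'M[R]_d) (l : R) : l != 0 ->
  lattice0 (l *: M) = (fun q => l *: q) @` lattice0 M.
Proof.
move=> l0; rewrite /lattice0 lattice_scale; apply/seteqP; split.
  move=> q [[q' Lq' <-] /= h]; exists q' => //; split => //= q0; apply: h.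
  by rewrite /= q0 scaler0.
move=> q [q' [Lq' /= q0] <-]; split; first by exists q'.
by move=> /= /eqP; rewrite scaler_eq0 (negPf l0) /= => /eqP.
Qed.

Lemma is_basis_scale (M : 'M[R]_d) (l : R) : l != 0 -> \det M != 0 -> is_basis (l *: M).
Proof. by move=> l0 hM; rewrite /is_basis detZ mulf_neq0 // expf_neq0. Qed.

Lemma zeta_scale (M : 'M[R]_d) (l s : R) : 0 < l ->
  zeta (l *: M) s = l `^ (- s) * zeta M s.
Proof.
move=> l0; rewrite /zeta lattice0_scale ?gt_eqF // esum_image; last first.
  by move=> q q' _ _; apply: scalerI; rewrite gt_eqF.
rewrite (eq_esum (b := fun q => ((l `^ (- s))%:E * (enorm q `^ (- s))%:E)%E)); last first.
  by move=> q _ /=; rewrite enorm_scale ?ltW // powRM ?enorm_ge0 ?EFinM // ltW.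
rewrite esumZ ?powR_ge0 // => [|q]; last by rewrite lee_fin powR_ge0.
by rewrite fine_pmul ?powR_gt0 //; apply: esum_ge0 => q _; rewrite lee_fin powR_ge0.
Qed.

Lemma isometric_scale (L L' : 'M[R]_d) (l : R) : 0 < l ->
  isometric (l *: L) (l *: L') -> isometric L L'.
Proof.
move=> l0 [Q [QQ hQ]]; exists Q; split => //.
have l0' : l != 0 by rewrite gt_eqF.
rewrite !lattice_scale in hQ.
apply/seteqP; split.
  move=> _ [q Lq <-].
  have : ((fun q => q *m Q) @` ((fun q => l *: q) @` lattice L)) (l *: (q *m Q)).
    by exists (l *: q); [exists q|rewrite scalemxAl].
  by rewrite hQ => -[q' Lq' /(scalerI l0') <-].
move=> q' Lq'.
have : ((fun q => l *: q) @` lattice L') (l *: q') by exists q'.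
rewrite -hQ => -[_ [q Lq <-]]; rewrite -scalemxAl => /(scalerI l0') h.
by exists q => //; rewrite h.
Qed.

End dilations.

Lemma unit_covol_det {R : realType} {d : nat} (M : 'M[R]_d) :
  unit_covol M -> \det M != 0.
Proof.
by rewrite /unit_covol => h; apply/eqP => det0; move: h; rewrite det0 normr0 => /eqP; rewrite eq_sym oner_eq0.
Qed.

Section optimal_dilation.
Context {R : realType} {d : nat} (alpha beta a b : R).
Hypotheses (d1 : (1 <= d)%N) (db : d%:R < beta) (ba : beta < alpha)
  (a0 : 0 < a) (b0 : 0 < b).

Let beta0 : 0 < beta. Proof. by apply: le_lt_trans db; rewrite ler0n. Qed.
Let alpha0 : 0 < alpha. Proof. exact: lt_trans ba. Qed.

Lemma lambda_phi_gt0 (M : 'M[R]_d) : unit_covol M -> 0 < lambda_phi a b alpha beta M.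
Proof.
move=> hM; have hdet := unit_covol_det hM.
have za := zeta_gt0 hdet d1 (lt_trans db ba); have zb := zeta_gt0 hdet d1 db.
by rewrite /lambda_phi powR_gt0 // divr_gt0 // !mulr_gt0.
Qed.

Lemma energy_at_lambda_phi (M : 'M[R]_d) : unit_covol M ->
  energy (phi a b alpha beta) (lambda_phi a b alpha beta M *: M) =
    - ((1 - beta / alpha) * b) * (zeta M beta * lambda_phi a b alpha beta M `^ (- beta)).
Proof.
move=> hM; have hdet := unit_covol_det hM.
have za := zeta_gt0 hdet d1 (lt_trans db ba); have zb := zeta_gt0 hdet d1 db.
set Q := alpha * a * zeta M alpha / (beta * b * zeta M beta).
have ab0 : 0 < alpha - beta by rewrite subr_gt0.
set l := lambda_phi a b alpha beta M.
have l0 : 0 < l := lambda_phi_gt0 hM.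
have lQ : l `^ (alpha - beta) = Q.
  by rewrite /l /lambda_phi -powRrM mulVf ?gt_eqF // powRr1 // ltW // divr_gt0 // !mulr_gt0.
have hdl : \det (l *: M) != 0 := is_basis_scale (lt0r_neq0 l0) hdet.
rewrite (energy_phiE hdl d1 db ba (ltW a0) (ltW b0)) !zeta_scale //.
have -> : l `^ (- alpha) = l `^ (- beta) * Q^-1.
  rewrite -lQ -powRN -powRD; last by apply/implyP => _; rewrite gt_eqF.
  by congr (_ `^ _); ring.
rewrite /Q; field.
by apply/and5P; split; rewrite ?gt_eqF.
Qed.

End optimal_dilation.

Lemma well_depth_gt0 {R : realType} (alpha beta b : R) :
  0 < alpha -> beta < alpha -> 0 < b -> 0 < (1 - beta / alpha) * b.
Proof. by move=> alpha0 ba b0; rewrite mulr_gt0 // subr_gt0 ltr_pdivrMr // mul1r. Qed.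

Lemma dilation_compare {R : realType} (z1 z2 l1 l2 beta : R) :
  0 < z1 -> 0 < l1 -> 0 < l2 -> 0 < beta -> z1 <= z2 ->
  z2 * l2 `^ (- beta) <= z1 * l1 `^ (- beta) ->
  l1 <= l2 /\ (l2 = l1 -> z2 = z1).
Proof.
move=> z10 l10 l20 beta0 z12 hz.
have t1 : 0 < l1 `^ (- beta) by rewrite powR_gt0.
have t21 : l2 `^ (- beta) <= l1 `^ (- beta).
  rewrite -(ler_pM2l z10); apply: le_trans hz; rewrite ler_pM2r ?powR_gt0 //.
split.
  by rewrite leNgt; apply/negP => /(powRN_lt l20) /(_ beta0); rewrite ltNge t21.
by move=> l21; apply/eqP; rewrite eq_le z12 andbT -(ler_pM2r t1) -{1}l21.
Qed.

Unset Implicit Arguments. Set Strict Implicit.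

Theorem proposition2p2 (R : realType) (d : nat) (alpha beta a b : R)
  (Ld : 'M[R]_d) :
  (1 <= d)%N -> d%:R < beta -> beta < alpha -> 0 < a -> 0 < b ->
  unit_covol Ld ->
  (forall L : 'M[R]_d, unit_covol L -> zeta Ld beta <= zeta L beta) ->
  (forall L : 'M[R]_d, is_basis L ->
     energy (phi a b alpha beta) ((lambda_phi a b alpha beta Ld) *: Ld)
       <= energy (phi a b alpha beta) L /\
     (energy (phi a b alpha beta) L =
        energy (phi a b alpha beta) ((lambda_phi a b alpha beta Ld) *: Ld) ->
      isometric L ((lambda_phi a b alpha beta Ld) *: Ld))) ->
  forall L : 'M[R]_d, unit_covol L ->
    lambda_phi a b alpha beta Ld <= lambda_phi a b alpha beta L /\
    (lambda_phi a b alpha beta L = lambda_phi a b alpha beta Ld -> isometric L Ld).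
Proof.
move=> d1 db ba a0 b0 hLd zeta_min E_min L hL.
have beta0 : 0 < beta by apply: le_lt_trans db; rewrite ler0n.
have E1 := energy_at_lambda_phi d1 db ba a0 b0 hLd.
have E2 := energy_at_lambda_phi d1 db ba a0 b0 hL.
have l1p := lambda_phi_gt0 d1 db ba a0 b0 hLd.
have l2p := lambda_phi_gt0 d1 db ba a0 b0 hL.
set l1 := lambda_phi a b alpha beta Ld in l1p E1 E_min *.
set l2 := lambda_phi a b alpha beta L in l2p E2 *.
clearbody l1 l2.
have [E_le E_eq] := E_min _ (is_basis_scale (lt0r_neq0 l2p) (unit_covol_det hL)).
have depth_le : zeta L beta * l2 `^ (- beta) <= zeta Ld beta * l1 `^ (- beta).
  by move: E_le; rewrite E1 E2 ler_nM2l // oppr_lt0 well_depth_gt0 // (lt_trans beta0).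
have [l12 zeta_eq] := dilation_compare (zeta_gt0 (unit_covol_det hLd) d1 db)
  l1p l2p beta0 (zeta_min L hL) depth_le.
split => // l21.
have E_same : energy (phi a b alpha beta) (l2 *: L) = energy (phi a b alpha beta) (l1 *: Ld).
  by rewrite E1 E2 (zeta_eq l21) l21.
by apply: (isometric_scale l2p); rewrite [in X in isometric _ X]l21; exact: E_eq.
Qed.
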